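(* Let $\mathcal{C}$ be an $[n,k]_q$ MWS code. If $a,b\in\mathcal{C}\setminus\{0\}$ satisfy $V(a)=V(b)$, then $a=\lambda b$ for some $\lambda\in\mathbb{F}_q^*$.
   Context: $\alpha$ is a fixed primitive element of $\mathbb{F}_q$. An $[n,k]_q$ code is a $k$-dimensional subspace of $\mathbb{F}_q^n$ (non-degenerate if $k\ge 2$) with Hamming weight $w$; it is MWS if $|\{w(c):c\in\mathcal{C}\setminus\{0\}\}|=\frac{q^k-1}{q-1}$. For $c\in\mathbb{F}_q^n$, $\beta\in\mathbb{F}_q$, $c[\beta]=|\{l:c_l=\beta\}|$ and $V(c)=(c[\alpha],\dots,c[\alpha^{q-1}],c[0])$. *)

From HB Require Import structures.
From mathcomp Require Import all_boot all_order all_algebra.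
Set Implicit Arguments. Unset Strict Implicit. Unset Printing Implicit Defensive.
Import GRing.Theory.
Local Open Scope ring_scope.

Definition hwt (F : finFieldType) (n : nat) (c : 'rV[F]_n) : nat :=
  #|[set i : 'I_n | c 0 i != 0]|.

Definition ccount (F : finFieldType) (n : nat) (c : 'rV[F]_n) (beta : F) : nat :=
  #|[set i : 'I_n | c 0 i == beta]|.

Definition Vvec (F : finFieldType) (alpha : F) (n : nat) (c : 'rV[F]_n) : seq nat :=
  [seq ccount c (alpha ^+ i) | i <- iota 1 (#|F| - 1)] ++ [:: ccount c 0].

Definition weights (F : finFieldType) (n : nat) (C : {vspace 'rV[F]_n}) : seq nat :=
  undup [seq hwt c | c <- enum 'rV[F]_n & (c \in C) && (c != 0)].

Definition MWS (F : finFieldType) (n : nat) (C : {vspace 'rV[F]_n}) : Prop :=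
  size (weights C) = ((#|F| ^ \dim C - 1) %/ (#|F| - 1))%N.

Definition code_nondegenerate (F : finFieldType) (n : nat) (C : {vspace 'rV[F]_n}) : Prop :=
  forall i : 'I_n, exists2 c, c \in C & c 0 i != 0.

(* Equal V-vectors force equal weights, since the last entry c[0] of V(c) is
   n - w(c).  In any [n,k]_q code the (q^k - 1) nonzero codewords fall into
   weight classes, each containing the q - 1 nonzero multiples of any of its
   members.  The MWS condition says there are (q^k - 1)/(q - 1) classes, so
   every class is exactly one such line: two non-proportional codewords of the
   same weight would put 2(q - 1) words in one class and overflow the count.
   Neither the primitive element nor non-degeneracy plays a role. *)

From HB Require Import structures.
From mathcomp Require Import all_boot all_order all_algebra finfield.
Set Implicit Arguments. Unset Strict Implicit. Unset Printing Implicit Defensive.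
Import GRing.Theory.
Local Open Scope ring_scope.

Lemma card_by_fibers (T : finType) (A : {set T}) (f : T -> nat) (W : seq nat) :
  uniq W -> {in A, forall x, f x \in W} ->
  #|A| = (\sum_(v <- W) #|[set x in A | f x == v]|)%N.
Proof.
move=> uniqW fAW; rewrite -sum1_card.
transitivity (\sum_(x in A) \sum_(v <- W) (v == f x : nat))%N.
  apply: eq_bigr => x Ax; rewrite -big_mkcond /= sum1_count.
  by rewrite -/(count_mem (f x) W) count_uniq_mem // fAW.
rewrite exchange_big /=; apply: eq_bigr => v _.
rewrite -sum1_card big_mkcond /= [RHS]big_mkcond /=.
by apply: eq_bigr => x _; rewrite inE eq_sym; case: (x \in A).
Qed.

Lemma hwt_add_ccount0 (F : finFieldType) (n : nat) (c : 'rV[F]_n) :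
  (hwt c + ccount c 0%R)%N = n.
Proof.
rewrite /hwt /ccount addnC -[in RHS](card_ord n) -(cardsC [set i | c 0 i == 0%R]).
by congr (_ + _)%N; apply: eq_card => i; rewrite !inE.
Qed.

Lemma Vvec_hwt (F : finFieldType) (alpha : F) (n : nat) (a b : 'rV[F]_n) :
  Vvec alpha a = Vvec alpha b -> hwt a = hwt b.
Proof.
move=> /(congr1 (last 0%N)); rewrite /Vvec !last_cat /= => eq_ccount0.
by apply: (@addIn (ccount a 0)); rewrite {2}eq_ccount0 !hwt_add_ccount0.
Qed.

Section ScalarLines.

Variables (F : finFieldType) (n : nat).
Implicit Types (a b c : 'rV[F]_n).

Lemma hwt_scale (lam : F) c : lam != 0 -> hwt (lam *: c) = hwt c.
Proof.
by move=> lam_neq0; apply: eq_card => i; rewrite !inE mxE mulf_eq0 negb_or lam_neq0.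
Qed.

Definition scalar_line c : {set 'rV[F]_n} := [set lam *: c | lam in [set~ 0]].

Lemma card_scalar_line c : c != 0 -> #|scalar_line c| = (#|F| - 1)%N.
Proof.
move=> c_neq0; rewrite card_imset ?cardsC1 ?subn1 // => lam mu eq_scale.
apply/eqP; rewrite -subr_eq0 -[_ == 0]orbF -(negbTE c_neq0) -scaler_eq0.
by rewrite scalerBl eq_scale subrr.
Qed.

Lemma scalar_line_meet a b :
  ~~ [disjoint scalar_line a & scalar_line b] -> exists2 lam : F, lam != 0 & a = lam *: b.
Proof.
case/pred0Pn => x /andP[/imsetP[l l_neq0 ->] /imsetP[m m_neq0 eq_lm]].
rewrite !in_setC1 in l_neq0 m_neq0.
exists (l^-1 * m); first by rewrite mulf_neq0 ?invr_eq0.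
by rewrite -scalerA -eq_lm scalerA mulVf ?scale1r.
Qed.

End ScalarLines.

Section WeightClasses.

Variables (F : finFieldType) (n : nat) (C : {vspace 'rV[F]_n}).
Implicit Types (a b c : 'rV[F]_n).

Definition nonzero_codewords : {set 'rV[F]_n} := [set c | (c \in C) && (c != 0)].

Definition weight_class (v : nat) : {set 'rV[F]_n} :=
  [set c in nonzero_codewords | hwt c == v].

Lemma card_nonzero_codewords : #|nonzero_codewords| = (#|F| ^ \dim C - 1)%N.
Proof.
rewrite -card_vspace [in RHS](cardD1 0) mem0v add1n subn1 /=.
by apply: eq_card => c; rewrite !inE andbC.
Qed.

Lemma weightsP v :
  reflect (exists2 c, c \in nonzero_codewords & hwt c = v) (v \in weights C).
Proof.
have memS c : (c \in [seq c <- enum 'rV[F]_n | (c \in C) && (c != 0)]) =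
               (c \in nonzero_codewords) by rewrite mem_filter mem_enum andbT inE.
rewrite mem_undup; apply: (iffP mapP) => -[c Cc eq_v].
  by exists c; rewrite -?memS.
by exists c; rewrite ?memS.
Qed.

Lemma card_nonzero_codewords_weights :
  #|nonzero_codewords| = (\sum_(v <- weights C) #|weight_class v|)%N.
Proof.
by apply: card_by_fibers; [apply: undup_uniq | move=> c Cc; apply/weightsP; exists c].
Qed.

Lemma scalar_line_sub_weight_class c :
  c \in nonzero_codewords -> scalar_line c \subset weight_class (hwt c).
Proof.
rewrite inE => /andP[Cc c_neq0]; apply/subsetP => _ /imsetP[lam + ->].
rewrite in_setC1 => lam_neq0.
by rewrite !inE memvZ // scaler_eq0 negb_or lam_neq0 c_neq0 hwt_scale /=.
Qed.

Lemma card_weight_class_ge v : v \in weights C -> (#|F| - 1 <= #|weight_class v|)%N.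
Proof.
case/weightsP => c Cc <-; move: (Cc); rewrite inE => /andP[_ c_neq0].
by rewrite -(card_scalar_line c_neq0) subset_leq_card ?scalar_line_sub_weight_class.
Qed.

Lemma card_weight_class_ge_double a b :
  a \in nonzero_codewords -> b \in nonzero_codewords -> hwt a = hwt b ->
  [disjoint scalar_line a & scalar_line b] ->
  (2 * (#|F| - 1) <= #|weight_class (hwt b)|)%N.
Proof.
move=> Ca Cb eq_ab disj_ab.
have nz c : c \in nonzero_codewords -> c != 0 by rewrite inE => /andP[].
have card_union : #|scalar_line a :|: scalar_line b| = (2 * (#|F| - 1))%N.
  have /eqP -> : #|scalar_line a :|: scalar_line b| ==
                 (#|scalar_line a| + #|scalar_line b|)%N by rewrite (leq_card_setU _ _).2.
  by rewrite !card_scalar_line ?nz // addnn mul2n.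
by rewrite -card_union subset_leq_card // subUset -{1}eq_ab !scalar_line_sub_weight_class.
Qed.

Lemma size_weights_bound_two_lines a b :
  a \in nonzero_codewords -> b \in nonzero_codewords -> hwt a = hwt b ->
  [disjoint scalar_line a & scalar_line b] ->
  ((size (weights C)).+1 * (#|F| - 1) <= #|F| ^ \dim C - 1)%N.
Proof.
move=> Ca Cb eq_ab disj_ab.
have Wb : hwt b \in weights C by apply/weightsP; exists b.
have uniqW : uniq (weights C) := undup_uniq _.
rewrite -card_nonzero_codewords card_nonzero_codewords_weights (bigD1_seq _ Wb) //=.
have sum_const : (\sum_(v <- weights C) (#|F| - 1) = size (weights C) * (#|F| - 1))%N.
  by rewrite big_const_seq count_predT iter_addn_0 mulnC.
rewrite mulSn -sum_const (bigD1_seq _ Wb) //= addnA addnn -mul2n.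
apply: leq_add; first exact: card_weight_class_ge_double disj_ab.
rewrite big_seq_cond [X in (_ <= X)%N]big_seq_cond.
by apply: leq_sum => v /andP[Wv _]; apply: card_weight_class_ge.
Qed.

Lemma MWS_eq_hwt_scalar a b :
  MWS C -> a \in nonzero_codewords -> b \in nonzero_codewords -> hwt a = hwt b ->
  exists2 lam : F, lam != 0 & a = lam *: b.
Proof.
move=> MWS_C Ca Cb eq_ab; apply: scalar_line_meet; apply/negP => disj_ab.
have := size_weights_bound_two_lines Ca Cb eq_ab disj_ab; rewrite MWS_C leqNgt ltn_ceil //.
by rewrite subn_gt0 finNzRing_gt1.
Qed.

End WeightClasses.

Theorem mainTheorem6 (F : finFieldType) (alpha : F)
  (Halpha : (#|F|.-1).-primitive_root alpha)
  (n k : nat) (C : {vspace 'rV[F]_n})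
  (HdimC : \dim C = k)
  (Hnondeg : (2 <= k)%N -> code_nondegenerate C)
  (HMWS : MWS C)
  (a b : 'rV[F]_n)
  (Ha : a \in C) (Ha0 : a != 0) (Hb : b \in C) (Hb0 : b != 0)
  (HV : Vvec alpha a = Vvec alpha b) :
  exists2 lambda : F, lambda != 0 & a = lambda *: b.
Proof.
apply: (MWS_eq_hwt_scalar HMWS); rewrite ?inE ?Ha ?Hb //.
exact: Vvec_hwt HV.
Qed.
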